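(* Let $\mathcal M=(\mathbf M^{(\lambda)})_{\lambda>0}$ be a weight matrix on $\mathbb N_0^d$ such that for every $\lambda>0$ there exist $0<\kappa\le\lambda$ and $A\ge1$ with $M^{(\kappa)}_{\alpha+e_j}\le A^{|\alpha|+1}M^{(\lambda)}_\alpha$ for all $\alpha\in\mathbb N_0^d$ and $1\le j\le d$. Then the sequence space $\Lambda_{(\mathcal M)}$ is nuclear.
   Context: A weight matrix is a family $\mathcal M=(\mathbf M^{(\lambda)})_{\lambda>0}$ with $\mathbf M^{(\lambda)}=(M^{(\lambda)}_\alpha)_{\alpha\in\mathbb N_0^d}$ sequences of positive reals, $M^{(\lambda)}_0=1$, and $M^{(\lambda)}_\alpha\le M^{(\kappa)}_\alpha$ for all $\alpha$ whenever $0<\lambda\le\kappa$. $e_j$ denotes the $j$-th unit vector, $|\alpha|=\sum\alpha_j$. The associated weight function of $\mathbf M=(M_\alpha)$ is $\omega_{\mathbf M}(t)=\sup_{\alpha\in\mathbb N^d_{0,t}}\log\frac{|t^\alpha|}{M_\alpha}$ ($t\in\mathbb R^d$), where $\mathbb N^d_{0,t}=\{\alpha:\alpha_j=0\text{ whenever }t_j=0\}$ and $0^0:=1$. With $\alpha^{1/2}=(\alpha_1^{1/2},\dots,\alpha_d^{1/2})$ and $\|\mathbf c\|_{\mathbf M,h}:=\sup_\alpha|c_\alpha|e^{\omega_{\mathbf M}(\alpha^{1/2}/h)}$, $\Lambda_{(\mathcal M)}$ is the space of $\mathbf c\in\mathbb C^{\mathbb N_0^d}$ with $\|\mathbf c\|_{\mathbf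 M^{(\lambda)},h}<\infty$ for all $\lambda,h>0$, with the Fréchet topology given by the norms $\|\cdot\|_{\mathbf M^{(1/j)},1/j}$, $j\in\mathbb N$. *)

From HB Require Import structures.
From mathcomp Require Import all_boot all_order all_algebra.
From mathcomp Require Import all_classical all_reals all_analysis.
From mathcomp Require Import complex.
Set Implicit Arguments. Unset Strict Implicit. Unset Printing Implicit Defensive.
Import Order.TTheory GRing.Theory Num.Theory.
Local Open Scope classical_set_scope.
Local Open Scope ring_scope.

Definition mindex (d : nat) := 'I_d -> nat.

Definition unitv (d : nat) (j : 'I_d) : mindex d := fun i => nat_of_bool (i == j).
Definition maddS (d : nat) (a : mindex d) (j : 'I_d) : mindex d :=
  fun i => (a i + unitv j i)%N.
Definition mlen (d : nat) (a : mindex d) : nat := (\sum_(i < d) a i)%N.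

Definition weight_matrix (R : realType) (d : nat) (M : R -> mindex d -> R) : Prop :=
  [/\ (forall lam a, 0 < lam -> 0 < M lam a),
      (forall lam, 0 < lam -> M lam (fun=> 0%N) = 1) &
      (forall lam kap a, 0 < lam -> lam <= kap -> M lam a <= M kap a)].

(* t^alpha = prod_j t_j^alpha_j, with 0^0 = 1 *)
Definition mpow (R : realType) (d : nat) (t : 'I_d -> R) (a : mindex d) : R :=
  \prod_(i < d) t i ^+ a i.

Definition supp_ok (R : realType) (d : nat) (t : 'I_d -> R) (a : mindex d) : Prop :=
  forall j, t j = 0 -> a j = 0%N.

Definition omegaM (R : realType) (d : nat) (Mseq : mindex d -> R) (t : 'I_d -> R)
  : \bar R :=
  ereal_sup [set (ln (`|mpow t a| / Mseq a))%:E | a in supp_ok t].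

Definition sqrt_div (R : realType) (d : nat) (a : mindex d) (h : R) : 'I_d -> R :=
  fun i => Num.sqrt (a i)%:R / h.

Definition wnorm (R : realType) (d : nat) (Mseq : mindex d -> R) (h : R)
  (c : mindex d -> R[i]) : \bar R :=
  ereal_sup [set ((Normc.normc (c a))%:E * expeR (omegaM Mseq (sqrt_div a h)))%E
            | a in [set: mindex d]].

Definition LambdaM (R : realType) (d : nat) (M : R -> mindex d -> R)
  : set (mindex d -> R[i]) :=
  [set c | forall lam h : R, 0 < lam -> 0 < h -> (wnorm (M lam) h c < +oo)%E].

(* the fundamental system of norms ||.||_{M^(1/j),1/j}, j = n+1 >= 1 *)
Definition pnorm (R : realType) (d : nat) (M : R -> mindex d -> R) (n : nat)
  (c : mindex d -> R[i]) : \bar R :=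
  wnorm (M (n.+1%:R^-1)) (n.+1%:R^-1) c.

(* Nuclearity of the Frechet space Lambda_(M) (Grothendieck/Pietsch): for
   every n there is m such that the canonical map from the local Banach space
   of p_m to that of p_n is nuclear, i.e. x |-> sum_k f_k(x) y_k with
   |f_k| <= p_m and sum_k p_n(y_k) < oo.  The y_k are taken in the weighted
   sup-normed space of sequences with finite p_n (which contains the
   completion of (Lambda, p_n)). *)
Definition nuclear_LambdaM (R : realType) (d : nat) (M : R -> mindex d -> R)
  : Prop :=
  forall n : nat, exists m : nat,
  exists f : nat -> (mindex d -> R[i]) -> R[i],
  exists y : nat -> mindex d -> R[i],
  [/\ (forall k (a : R[i]) c c', LambdaM M c -> LambdaM M c' ->
          f k (fun i => a * c i + c' i) = a * f k c + f k c'),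
      (forall k c, LambdaM M c -> ((Normc.normc (f k c))%:E <= pnorm M m c)%E),
      (\sum_(0 <= k <oo) pnorm M n (y k) < +oo)%E &
      (forall c, LambdaM M c ->
         (fun N : nat => pnorm M n (fun i => c i - \sum_(k < N) f k c * y k i))
           @ \oo --> 0%E)].

From HB Require Import structures.
From mathcomp Require Import all_boot all_order all_algebra.
From mathcomp Require Import all_classical all_reals all_analysis.
From mathcomp Require Import complex ring lra.
Import Order.TTheory GRing.Theory Num.Theory.
Set Implicit Arguments. Unset Strict Implicit. Unset Printing Implicit Defensive.
Local Open Scope ring_scope.

(* Testing the supremum defining omega_{M^kap}(A t) at alpha + e_j, the hypothesis
   gives omega_{M^lam}(t) + log max(1, |t|_oo) <= omega_{M^kap}(A t).  Iterating
   this 4d times and rescaling t = alpha^{1/2} (n+1) yields, for some m,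
     e^{omega_n(alpha)} G(alpha) <= e^{omega_m(alpha)},
     G(alpha) = prod_i (alpha_i + 1)(alpha_i + 2) / 6^d,
   where omega_k(alpha) = omega_{M^(1/(k+1))}(alpha^{1/2} (k+1)); indeed
   G(alpha) <= max(1, |alpha^{1/2}|_oo)^{4d}.  Since sum_alpha 1/G(alpha) = 6^d,
   the canonical map from p_m to p_n is the nuclear diagonal series
   x |-> sum_alpha (x_alpha r_alpha) (e_alpha / r_alpha), r_alpha = e^{omega_n(alpha)} G(alpha):
   each coefficient functional is bounded by p_m, p_n(e_alpha / r_alpha) = 1/G(alpha),
   and the remainder after N terms is at most p_m(x) sup 1/G(alpha) over the
   remaining alpha, which is small because G(alpha) >= max_i alpha_i / 6^d. *)

Section WeightFunction.
Variables (R : realType) (d : nat).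
Implicit Types (t : 'I_d -> R) (a b : mindex d) (Ms : mindex d -> R).

Lemma normr_mpow t a : `|mpow t a| = \prod_(i < d) `|t i| ^+ a i.
Proof. by rewrite normr_prod; apply: eq_bigr => i _; rewrite normrX. Qed.

Lemma normr_mpow_gt0 t a : supp_ok t a -> 0 < `|mpow t a|.
Proof.
move=> ta; rewrite normr_mpow; apply: prodr_gt0 => i _.
have [ti0|ti0] := eqVneq (t i) 0; first by rewrite (ta i ti0) expr0.
by rewrite exprn_gt0 ?normr_gt0.
Qed.

Lemma omegaM_ge0 Ms t : Ms (fun=> 0%N) = 1 -> (0 <= omegaM Ms t)%E.
Proof.
move=> Ms0; apply: ereal_sup_ubound; exists (fun=> 0%N) => //.
by rewrite /mpow Ms0 big1 ?normr1 ?divr1 ?ln1.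
Qed.

Lemma le_omegaM Ms Ms' t t' :
  (forall b, 0 < Ms' b <= Ms b) -> (forall i, `|t i| <= `|t' i|) ->
  (omegaM Ms t <= omegaM Ms' t')%E.
Proof.
move=> MsMs' tt'; apply: ge_ereal_sup => _ [b tb <-].
have t'b : supp_ok t' b.
  move=> i /eqP; rewrite -normr_eq0 => /eqP t'i0; apply: tb.
  by apply/normr0_eq0/le_anti; rewrite normr_ge0 -t'i0 tt'.
apply: le_ereal_sup_tmp; eexists; first by exists b.
rewrite lee_fin.
have /andP[Ms'b0 Ms'b] := MsMs' b; have Msb0 := lt_le_trans Ms'b0 Ms'b.
have tb0 := normr_mpow_gt0 tb; have t'b0 := normr_mpow_gt0 t'b.
rewrite ler_ln ?posrE ?divr_gt0 //.
apply: ler_pM; rewrite ?invr_ge0 ?(ltW tb0) ?(ltW Msb0) //.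
  by rewrite !normr_mpow; apply: ler_prod => i _; rewrite exprn_ge0 ?lerXn2r ?nnegrE.
by rewrite lef_pV2 ?posrE.
Qed.

Lemma mlen_unitv (j : 'I_d) : mlen (unitv j) = 1%N.
Proof. by rewrite /mlen (bigD1 j) //= big1 /unitv ?eqxx // => i /negbTE ->. Qed.

Lemma mpowZ_maddS (A : R) t b j :
  mpow (fun i => A * t i) (maddS b j) = A ^+ (mlen b).+1 * mpow t b * t j.
Proof.
rewrite /mpow /maddS.
under eq_bigr => i _ do rewrite exprMn !exprD.
rewrite !big_split /= !prodrXr -/(mlen b) -/(mlen (unitv j)) mlen_unitv -exprSr.
rewrite [X in _ * (_ * X)](bigD1 j) //= /unitv eqxx expr1 !mulrA.
by rewrite [X in _ * X = _]big1 ?mulr1 // => i /negbTE ->; rewrite expr0.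
Qed.

Lemma omegaM_ln_coord_le (Ml Mk : mindex d -> R) (A : R) t j :
  (forall b, 0 < Ml b) -> (forall b, 0 < Mk b) -> 1 <= A ->
  (forall b, Mk (maddS b j) <= A ^+ (mlen b).+1 * Ml b) -> t j != 0 ->
  (omegaM Ml t + (ln `|t j|)%:E <= omegaM Mk (fun i => (A * t i)%R))%E.
Proof.
move=> Ml0 Mk0 A1 MkMl tj0; have A0 : 0 < A := lt_le_trans ltr01 A1.
rewrite -leeBrDr //; apply: ge_ereal_sup => _ [b tb <-]; rewrite leeBrDr //.
have Atb : supp_ok (fun i => A * t i) (maddS b j).
  move=> i /eqP; rewrite mulf_eq0 gt_eqF //= => /eqP ti0.
  rewrite /maddS (tb i ti0) /unitv; case: eqVneq => [ij|//].
  by move: tj0; rewrite -ij ti0 eqxx.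
apply: le_ereal_sup_tmp; eexists; first by exists (maddS b j).
have P0 := normr_mpow_gt0 tb; have T0 : 0 < `|t j| by rewrite normr_gt0.
have Q0 : 0 < A ^+ (mlen b).+1 := exprn_gt0 _ A0.
have MkQ0 := Mk0 (maddS b j); have Mlb0 := Ml0 b; have AP0 := normr_mpow_gt0 Atb.
rewrite -EFinD lee_fin -lnM ?posrE ?divr_gt0 // ler_ln ?posrE ?mulr_gt0 ?divr_gt0 ?invr_gt0 //.
rewrite mpowZ_maddS !normrM (gtr0_norm Q0) ler_pdivlMr //.
apply: le_trans (_ : _ <= `|mpow t b| / Ml b * `|t j| * (A ^+ (mlen b).+1 * Ml b)) _.
  by apply: ler_wpM2l (MkMl b); apply/ltW/mulr_gt0/T0/divr_gt0.
rewrite [leLHS](_ : _ = A ^+ (mlen b).+1 * `|mpow t b| * `|t j|) //.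
by field; rewrite gt_eqF.
Qed.

Definition normmax1 t : R := \big[Num.max/1]_(i < d) `|t i|.

Lemma normmax1_ge1 t : 1 <= normmax1 t.
Proof. by apply: (big_rec (fun x => 1 <= x)) => // i x _ x1; rewrite le_max x1 orbT. Qed.

Lemma ler_normmax1 t i : `|t i| <= normmax1 t.
Proof. by rewrite /normmax1 (bigD1 i) //= le_max lexx. Qed.

Lemma le_normmax1 t t' : (forall i, `|t i| <= `|t' i|) -> normmax1 t <= normmax1 t'.
Proof.
move=> tt'; apply: (big_ind (fun x => x <= normmax1 t')) => [|x y|i _].
- exact: normmax1_ge1.
- by rewrite ge_max => -> ->.
- exact: le_trans (tt' i) (ler_normmax1 t' i).
Qed.

Lemma normmax1_attained t : normmax1 t = 1 \/ exists j, normmax1 t = `|t j|.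
Proof.
apply: (big_ind (fun x => x = 1 \/ exists j, x = `|t j|)) => [|x y|i _].
- by left.
- by move=> ? ?; rewrite /Num.max; case: ifP.
- by right; exists i.
Qed.

Lemma ler_normZ_ge1 (A x : R) : 1 <= A -> `|x| <= `|A * x|.
Proof. by move=> A1; rewrite normrM ler_peMl // (le_trans A1 (ler_norm A)). Qed.

Lemma omegaM_ln_normmax1_le (Ml Mk : mindex d -> R) (A : R) t :
  (forall b, 0 < Mk b <= Ml b) -> 1 <= A ->
  (forall b j, Mk (maddS b j) <= A ^+ (mlen b).+1 * Ml b) ->
  (omegaM Ml t + (ln (normmax1 t))%:E <= omegaM Mk (fun i => (A * t i)%R))%E.
Proof.
move=> MkMl A1 MkA.
have Mk0 b : 0 < Mk b by case/andP: (MkMl b).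
have Ml0 b : 0 < Ml b by case/andP: (MkMl b) => /lt_le_trans; apply.
case: (normmax1_attained t) => [->|[j ->]].
  by rewrite ln1 adde0; apply: le_omegaM => // i; exact: ler_normZ_ge1.
have [tj0|tj0] := eqVneq (t j) 0.
  by rewrite tj0 normr0 ln0 // adde0; apply: le_omegaM => // i; exact: ler_normZ_ge1.
exact: omegaM_ln_coord_le.
Qed.

End WeightFunction.

Section PolyWeight.
Context {R : realType} {d : nat}.
Implicit Types (a : mindex d).

Definition polyweight a : R := (\prod_(i < d) ((a i).+1%:R * (a i).+2%:R)) / 6 ^+ d.

Lemma polyweight_gt0 a : 0 < polyweight a.
Proof. by rewrite divr_gt0 ?exprn_gt0 // prodr_gt0. Qed.

Lemma polyweight_le_pow a (u : R) :
  (forall i, Num.sqrt (a i)%:R <= u) -> 1 <= u -> polyweight a <= u ^+ (4 * d).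
Proof.
move=> au u1; have prod_const (x : R) : \prod_(i < d) x = x ^+ d.
  by rewrite prodr_const card_ord.
rewrite /polyweight -prod_const -prodfV -big_split /= exprM -prod_const.
apply: ler_prod => i _; rewrite divr_ge0 ?mulr_ge0 //=.
have a_le : (a i)%:R <= u ^+ 2.
  rewrite -[leLHS]sqr_sqrtr // lerXn2r ?nnegrE ?sqrtr_ge0 //.
  exact: le_trans ler01 u1.
have u21 : 1 <= u ^+ 2 by rewrite exprn_ege1.
rewrite ler_pdivrMr // -!natr1 -[4%N]/(2 + 2)%N exprD.
have a_ge0 : 0 <= (a i)%:R :> R by [].
move: a_le u21 a_ge0; set v := u ^+ 2; set x := (a i)%:R; nra.
Qed.

Lemma polyweight_ge_coord a i : (a i)%:R / 6 ^+ d <= polyweight a.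
Proof.
rewrite ler_pM2r ?invr_gt0 ?exprn_gt0 // (bigD1 i) //= -[leLHS]mulr1.
apply: ler_pM => //; first by rewrite -natrM ler_nat (leq_trans (leqnSn _)) // leq_pmulr.
apply: (big_ind (fun x : R => 1 <= x)) => [//|x y|j _]; first exact: mulr_ege1.
by rewrite -natrM ler1n muln_gt0.
Qed.

Lemma sum_inv_consecutive (K : nat) :
  \sum_(j < K) (j.+1%:R * j.+2%:R : R)^-1 = 1 - K.+1%:R^-1.
Proof.
elim: K => [|K IH]; first by rewrite big_ord0 invr1 subrr.
rewrite big_ord_recr /= IH -[K.+2]addn1 -[K.+1]addn1 !natrD.
by field; rewrite !natr1 !pnatr_eq0.
Qed.

Lemma sum_inv_polyweight_box (K : nat) :
  \sum_(b : {ffun 'I_d -> 'I_K}) (polyweight (fun i => b i))^-1 <= 6 ^+ d.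
Proof.
under eq_bigr => b _ do rewrite /polyweight invfM invrK mulrC -prodfV.
rewrite -mulr_sumr -[leRHS]mulr1 ler_wpM2l ?exprn_ge0 //.
rewrite -(bigA_distr_bigA (fun (i : 'I_d) (j : 'I_K) => (j.+1%:R * j.+2%:R : R)^-1)) /=.
apply: prodr_ile1 => i _.
apply/andP; split; first by apply: sumr_ge0 => j _; rewrite invr_ge0.
by rewrite sum_inv_consecutive gerBl invr_ge0.
Qed.

End PolyWeight.

Section Domination.
Variables (R : realType) (d : nat) (M : R -> mindex d -> R).
Hypothesis HM : weight_matrix M.
Hypothesis HA : forall lam : R, 0 < lam ->
  exists kap : R, exists A : R,
    [/\ 0 < kap, kap <= lam, 1 <= A &
      forall (a : mindex d) (j : 'I_d), M kap (maddS a j) <= A ^+ (mlen a).+1 * M lam a].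
Implicit Types (a : mindex d).

Lemma omegaM_iter lam : 0 < lam -> forall k : nat, exists lamk S : R,
  [/\ 0 < lamk, 1 <= S & forall t : 'I_d -> R,
    (omegaM (M lam) t + (k%:R * ln (normmax1 t))%:E
      <= omegaM (M lamk) (fun i => (S * t i)%R))%E].
Proof.
case: HM => M0 _ Mmono lam0; elim=> [|k [lk [S [lk0 S1 IH]]]].
  exists lam, 1; split => // t; rewrite mul0r adde0.
  by apply: le_omegaM => [b|i]; rewrite ?M0 ?lexx ?mul1r.
have [kap [A [kap0 kaplk A1 MA]]] := HA lk0.
exists kap, (A * S); split => //; first by rewrite -[1]mulr1 ler_pM.
move=> t; rewrite -addn1 natrD mulrDl mul1r EFinD addeA.
have -> : (fun i => A * S * t i) = (fun i => A * (S * t i)).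
  by apply: funext => i; rewrite mulrA.
apply: le_trans (omegaM_ln_normmax1_le _ _ A1 MA); last by move=> b; rewrite M0 ?Mmono.
apply: leeD => //; rewrite lee_fin ler_ln ?posrE ?(lt_le_trans ltr01) ?normmax1_ge1 //.
by apply: le_normmax1 => i; exact: ler_normZ_ge1.
Qed.

Definition pweight (n : nat) a : \bar R :=
  expeR (omegaM (M n.+1%:R^-1) (sqrt_div a n.+1%:R^-1)).

Lemma sqrt_div_invn a (k : nat) i :
  sqrt_div a (k.+1%:R^-1 : R) i = Num.sqrt (a i)%:R * k.+1%:R.
Proof. by rewrite /sqrt_div invrK. Qed.

Lemma ln_polyweight_le a (k : nat) :
  ln (polyweight a) <= (4 * d)%:R * ln (normmax1 (sqrt_div a (k.+1%:R^-1 : R))).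
Proof.
set t := sqrt_div a _; have t1 := normmax1_ge1 t.
have t0 : 0 < normmax1 t := lt_le_trans ltr01 t1.
rewrite mulr_natl -lnXn // ler_ln ?posrE ?polyweight_gt0 ?exprn_gt0 //.
apply: polyweight_le_pow t1 => i; apply: le_trans (ler_normmax1 t i).
by rewrite /t sqrt_div_invn ger0_norm ?mulr_ge0 ?sqrtr_ge0 // ler_peMr ?sqrtr_ge0 // ler1n.
Qed.

Lemma exists_index_above (S lam : R) (n : nat) : 0 <= S -> 0 < lam ->
  exists m : nat, S * n.+1%:R <= m.+1%:R /\ m.+1%:R^-1 <= lam.
Proof.
move=> S0 lam0; exists (Num.Def.truncn (S * n.+1%:R + lam^-1)).
have := truncnS_gt (S * n.+1%:R + lam^-1); set m := Num.Def.truncn _ => Hm.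
split; first by apply/ltW/(le_lt_trans _ Hm); rewrite lerDl invr_ge0 ltW.
rewrite -[lam]invrK lef_pV2 ?posrE ?invr_gt0 //.
by apply/ltW/(le_lt_trans _ Hm); rewrite lerDr mulr_ge0.
Qed.

Lemma omegaM_sqrt_div_le a (lam S : R) (n m : nat) :
  m.+1%:R^-1 <= lam -> 1 <= S -> S * n.+1%:R <= m.+1%:R ->
  (omegaM (M lam) (fun i => (S * sqrt_div a n.+1%:R^-1 i)%R)
    <= omegaM (M m.+1%:R^-1) (sqrt_div a m.+1%:R^-1))%E.
Proof.
case: HM => M0 _ Mmono mlam S1 Sn.
have S0 : 0 <= S := le_trans ler01 S1.
apply: le_omegaM => [b|i]; first by rewrite M0 ?Mmono ?invr_gt0.
rewrite !sqrt_div_invn normrM !ger0_norm ?mulr_ge0 ?sqrtr_ge0 //.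
by rewrite mulrCA ler_wpM2l ?sqrtr_ge0.
Qed.

Lemma pweight_polyweight_le (n : nat) :
  exists m : nat, forall a, (pweight n a * (polyweight a)%:E <= pweight m a)%E.
Proof.
have n0 : 0 < n.+1%:R^-1 :> R by rewrite invr_gt0.
have [lam [S [lam0 S1 iter]]] := omegaM_iter n0 (4 * d).
have [m [Sn mlam]] := exists_index_above n (le_trans ler01 S1) lam0.
exists m => a.
have -> : (polyweight a : R)%:E = expeR (ln (polyweight a : R))%:E.
  by rewrite /= lnK // posrE polyweight_gt0.
rewrite /pweight -expeRD lee_expeR.
apply: le_trans (omegaM_sqrt_div_le a mlam S1 Sn).
apply: le_trans (iter _); apply: leeD => //.
by rewrite lee_fin ln_polyweight_le.
Qed.

End Domination.

Section MindexCoding.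
Variable d : nat.
Implicit Types (a : mindex d).

(* [mindex d] is a bare function type; it is enumerated through the countable
   type of finite functions [{ffun 'I_d -> nat}]. *)
Definition mindex_code a : nat := pickle (finfun a : {ffun 'I_d -> nat}).

Definition mindex_decode (k : nat) : option (mindex d) :=
  omap (fun F : {ffun 'I_d -> nat} => fun i => F i) (pickle_inv k).

Lemma mindex_codeK a : mindex_decode (mindex_code a) = Some a.
Proof.
rewrite /mindex_decode /mindex_code pickleK_inv /=; congr Some.
by apply: funext => i; rewrite ffunE.
Qed.

Lemma mindex_decodeK k a : mindex_decode k = Some a -> mindex_code a = k.
Proof.
rewrite /mindex_decode; case ka: (pickle_inv k) => [F|] //= [<-].
rewrite /mindex_code (_ : finfun _ = F); last by apply/ffunP => i; rewrite ffunE.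
by have := @pickle_invK {ffun 'I_d -> nat} k; rewrite ka.
Qed.

Definition of_box (K : nat) (b : {ffun 'I_d -> 'I_K}) : mindex d := fun i => b i.

Lemma of_box_inord (K : nat) a : (forall i, a i <= K)%N ->
  of_box [ffun i => (inord (a i) : 'I_K.+1)] = a.
Proof. by move=> aK; apply: funext => i; rewrite /of_box ffunE inordK ?ltnS. Qed.

Lemma mindex_decode_box (N : nat) : exists K : nat,
  forall (k : 'I_N) a, mindex_decode k = Some a -> forall i, (a i <= K)%N.
Proof.
exists (\max_(k < N) oapp (@mlen d) 0%N (mindex_decode k)) => k a ka i.
apply: leq_trans (_ : mlen a <= _)%N; first by rewrite /mlen (bigD1 i) //= leq_addr.
by have := leq_bigmax (F := fun k : 'I_N => oapp (@mlen d) 0%N (mindex_decode k)) k; rewrite /= ka.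
Qed.

Lemma mindex_code_large (K : nat) : exists N0 : nat,
  forall a, (N0 <= mindex_code a)%N -> exists i, (K < a i)%N.
Proof.
exists (\max_(b : {ffun 'I_d -> 'I_K.+1}) mindex_code (of_box b)).+1 => a large.
have [i Ki|small] := pickP (fun i => K < a i)%N; first by exists i.
have box : of_box [ffun i => inord (a i) : 'I_K.+1] = a.
  by apply: of_box_inord => i; rewrite leqNgt small.
have := leq_bigmax (F := fun b : {ffun 'I_d -> 'I_K.+1} => mindex_code (of_box b))
  [ffun i => inord (a i)].
by rewrite box leqNgt large.
Qed.

End MindexCoding.
Arguments mindex_decode {d} k.

Lemma normc_ge0 (R : rcfType) (x : R[i]) : 0 <= Normc.normc x.
Proof. by case: x => a b; rewrite /= sqrtr_ge0. Qed.

Lemma normc_real (R : rcfType) (x : R) : Normc.normc (x%:C)%C = `|x|.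
Proof. by rewrite /= expr0n /= addr0 sqrtr_sqr. Qed.

Lemma sum_inv_polyweight_decode (R : realType) (d N : nat) :
  \sum_(k < N) oapp (fun a => (polyweight a)^-1) 0 (@mindex_decode d k) <= 6 ^+ d :> R.
Proof.
have [K box] := @mindex_decode_box d N.
pose h (b : {ffun 'I_d -> 'I_K.+1}) : R := (polyweight (of_box b))^-1.
have h0 b : 0 <= h b by rewrite invr_ge0 ltW ?polyweight_gt0.
apply: le_trans (@sum_inv_polyweight_box R d K.+1).
apply: le_trans (_ : _ <= \sum_(k < N) \sum_b
    (if k == mindex_code (of_box b) :> nat then h b else 0)) _.
  apply: ler_sum => k _; case ka: (mindex_decode k) => [a|] /=; last first.
    by apply: sumr_ge0 => b _; case: ifP.
  rewrite (bigD1 [ffun i => inord (a i)]) //= of_box_inord; last exact: box ka.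
  rewrite (mindex_decodeK ka) eqxx /h of_box_inord; last exact: box ka.
  by rewrite lerDl; apply: sumr_ge0 => b _; case: ifP => // _; exact: h0.
rewrite exchange_big /=; apply: ler_sum => b _.
by rewrite -big_mkcond (big_ord1_eq _ (fun=> h b)); case: ifP => // _; exact: h0.
Qed.

Section Pnorm.
Variables (R : realType) (d : nat) (M : R -> mindex d -> R).
Hypothesis HM : weight_matrix M.
Implicit Types (n : nat) (a b : mindex d) (c : mindex d -> R[i]).

Lemma pweight_ge1 n a : (1 <= pweight M n a)%E.
Proof.
case: HM => _ M1 _.
by rewrite /pweight -expeR0 lee_expeR omegaM_ge0 // M1 // invr_gt0.
Qed.

Lemma pweight_cases n a :
  pweight M n a = +oo%E \/ exists2 x : R, pweight M n a = x%:E & 1 <= x.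
Proof.
have := pweight_ge1 n a; case: (pweight M n a) => [x| |] //; last by left.
by rewrite lee_fin => x1; right; exists x.
Qed.

Lemma pnorm_ge_coord n c a :
  ((Normc.normc (c a))%:E * pweight M n a <= pnorm M n c)%E.
Proof. by apply: le_ereal_sup_tmp; eexists; first by exists a. Qed.

Lemma pnorm_ge0 n c : (0 <= pnorm M n c)%E.
Proof.
apply: le_trans (pnorm_ge_coord n c (fun=> 0%N)).
by rewrite mule_ge0 ?lee_fin ?normc_ge0 // (le_trans _ (pweight_ge1 _ _)).
Qed.

Lemma pnorm_fin_num n c : LambdaM M c -> pnorm M n c \is a fin_num.
Proof. by move=> Lc; rewrite ge0_fin_numE ?pnorm_ge0 // Lc ?invr_gt0. Qed.

End Pnorm.

Section DiagonalMap.
Variables (R : realType) (d : nat) (M : R -> mindex d -> R) (n m : nat).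
Hypothesis HM : weight_matrix M.
Hypothesis pweight_dom :
  forall a, (pweight M n a * (polyweight a)%:E <= pweight M m a)%E.
Implicit Types (a b : mindex d) (c : mindex d -> R[i]).

(* Where [pweight M n a = +oo], [fine] makes [diag_coef a = 0]; every [c] in
   [LambdaM M] vanishes at such [a] (coord_eq0_of_diag_coef_eq0). *)
Definition diag_coef a : R := fine (pweight M n a) * polyweight a.

Definition diag_functional (k : nat) c : R[i] :=
  if mindex_decode k is Some a then c a * (diag_coef a)%:C%C else 0.

Definition diag_vector (k : nat) b : R[i] :=
  if mindex_code b == k then ((diag_coef b)^-1)%:C%C else 0.

Lemma diag_coef_ge0 a : 0 <= diag_coef a.
Proof.
rewrite /diag_coef; case: (pweight_cases HM n a) => [->|[x -> x1]] /=.
  by rewrite mul0r.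
by rewrite mulr_ge0 ?(le_trans ler01 x1) ?ltW ?polyweight_gt0.
Qed.

Lemma diag_coef_le a : ((diag_coef a)%:E <= pweight M m a)%E.
Proof.
have := pweight_dom a; rewrite /diag_coef.
case: (pweight_cases HM n a) => [->|[x -> _]] //= _.
by rewrite mul0r (le_trans _ (pweight_ge1 HM _ _)).
Qed.

Lemma diag_functional_linear k (x : R[i]) c c' :
  diag_functional k (fun i => x * c i + c' i) =
  x * diag_functional k c + diag_functional k c'.
Proof.
rewrite /diag_functional; case: (mindex_decode k) => [a|]; last by rewrite mulr0 addr0.
by rewrite mulrDl mulrA.
Qed.

Lemma normc_diag_functional_le k c :
  ((Normc.normc (diag_functional k c))%:E <= pnorm M m c)%E.
Proof.
rewrite /diag_functional; case: (mindex_decode k) => [a|]; last first.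
  by rewrite Normc.normc0 (pnorm_ge0 HM).
rewrite Normc.normcM normc_real ger0_norm ?diag_coef_ge0 // EFinM.
apply: le_trans (pnorm_ge_coord M m c a).
by rewrite lee_wpmul2l ?lee_fin ?normc_ge0 ?diag_coef_le.
Qed.

Lemma pnorm_diag_vector_le k : (pnorm M n (diag_vector k)
  <= (oapp (fun a => (polyweight a)^-1) 0 (mindex_decode k))%:E)%E.
Proof.
apply: ge_ereal_sup => _ [b _ <-]; rewrite /diag_vector.
have G0 : 0 < polyweight b :> R := polyweight_gt0 b.
case: eqP => [<-|_]; last first.
  rewrite Normc.normc0 mul0e lee_fin.
  by case: (mindex_decode k) => //= a; rewrite invr_ge0 ltW ?polyweight_gt0.
rewrite normc_real ger0_norm ?invr_ge0 ?diag_coef_ge0 // mindex_codeK -/(pweight M n b).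
rewrite /diag_coef.
case: (pweight_cases HM n b) => [->|[x -> x1]] /=.
  by rewrite mul0r invr0 mul0e lee_fin invr_ge0 (ltW G0).
by rewrite -EFinM lee_fin invfM mulrAC mulVf ?mul1r // gt_eqF // (lt_le_trans ltr01 x1).
Qed.

Lemma sum_pnorm_diag_vector_lt_oo :
  (\sum_(0 <= k <oo) pnorm M n (diag_vector k) < +oo)%E.
Proof.
apply: (@le_lt_trans _ _ ((6 ^+ d : R))%:E); last by rewrite ltry.
apply: (@le_trans _ _
  (\sum_(0 <= k <oo) (oapp (fun a => (polyweight a)^-1) 0 (mindex_decode k))%:E)%E).
  apply: lee_nneseries => [k _ _|k _]; [exact: pnorm_ge0 | exact: pnorm_diag_vector_le].
apply: lime_le.
  apply: is_cvg_nneseries => k _ _; rewrite lee_fin.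
  by case: mindex_decode => //= a; rewrite invr_ge0 ltW ?polyweight_gt0.
by near=> N; rewrite sumEFin lee_fin big_mkord sum_inv_polyweight_decode.
Unshelve. all: end_near.
Qed.

Lemma coord_eq0_of_diag_coef_eq0 c b :
  LambdaM M c -> diag_coef b = 0 -> c b = 0.
Proof.
move=> Lc; rewrite /diag_coef; case: (pweight_cases HM n b) => [oo _|[x -> x1]]; last first.
  by move/eqP; rewrite mulf_eq0 !gt_eqF ?polyweight_gt0 ?(lt_le_trans ltr01 x1).
apply: Normc.eq0_normc; apply/eqP/negPn/negP => cb0.
have := pnorm_ge_coord M n c b; rewrite oo gt0_muley ?lte_fin ?lt0r ?cb0 ?normc_ge0 //.
by rewrite leye_eq => /eqP pinf; move: (pnorm_fin_num HM n Lc); rewrite pinf.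
Qed.

Lemma diag_partial_sumE c (N : nat) b : LambdaM M c ->
  c b - \sum_(k < N) diag_functional k c * diag_vector k b =
  if (mindex_code b < N)%N then 0 else c b.
Proof.
move=> Lc; have -> : \sum_(k < N) diag_functional k c * diag_vector k b =
    \sum_(k < N | k == mindex_code b :> nat) c b.
  rewrite [RHS]big_mkcond; apply: eq_bigr => k _ /=; rewrite /diag_vector eq_sym.
  case: eqP => [->|_]; last by rewrite mulr0.
  rewrite /diag_functional mindex_codeK -mulrA -rmorphM /=.
  have [r0|r0] := eqVneq (diag_coef b) 0.
    by rewrite (coord_eq0_of_diag_coef_eq0 Lc r0) mul0r.
  by rewrite divff // mulr1.
by rewrite (big_ord1_eq _ (fun=> c b)); case: ifP => _; rewrite ?subrr ?subr0.
Qed.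

Lemma pnorm_coord_le c b : ((Normc.normc (c b))%:E * pweight M n b
  <= pnorm M m c * ((polyweight b)^-1)%:E)%E.
Proof.
rewrite lee_pdivlMr ?polyweight_gt0 // -muleA.
apply: le_trans (pnorm_ge_coord M m c b).
by apply: lee_wpmul2l; rewrite ?lee_fin ?normc_ge0 ?pweight_dom.
Qed.

Lemma pnorm_partial_sum_le c (eps : R) : LambdaM M c -> 0 < eps ->
  exists N0 : nat, forall N : nat, (N0 <= N)%N ->
  (pnorm M n (fun b => (c b - \sum_(k < N) diag_functional k c * diag_vector k b)%R)
    <= eps%:E)%E.
Proof.
move=> Lc eps0; have /fineK PE := pnorm_fin_num HM m Lc; set P := fine _ in PE.
have [N0 large] := @mindex_code_large d (Num.Def.truncn (P * 6 ^+ d / eps)).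
exists N0 => N N0N; apply: ge_ereal_sup => _ [b _ <-].
rewrite diag_partial_sumE //; case: ltnP => [_|Nb].
  by rewrite Normc.normc0 mul0e lee_fin ltW.
rewrite -/(pweight M n b); apply: le_trans (pnorm_coord_le c b) _.
have [i Ki] := large b (leq_trans N0N Nb).
rewrite -PE -EFinM lee_fin ler_pdivrMr ?polyweight_gt0 //.
apply: le_trans (ler_wpM2l (ltW eps0) (polyweight_ge_coord b i)).
have : P * 6 ^+ d / eps <= (b i)%:R.
  by apply/ltW/(lt_le_trans (truncnS_gt _)); rewrite ler_nat.
by rewrite ler_pdivrMr // mulrA (mulrC eps) ler_pdivlMr ?exprn_gt0.
Qed.

End DiagonalMap.

Lemma cvge0_le_eps (R : realType) (u : nat -> \bar R) :
  (forall N, (0 <= u N)%E) ->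
  (forall eps : R, 0 < eps -> exists N0 : nat, forall N, (N0 <= N)%N -> (u N <= eps%:E)%E) ->
  (u @ \oo --> 0%E)%classic.
Proof.
move=> u0 small.
have fin eps N0 : (forall N, (N0 <= N)%N -> (u N <= eps%:E)%E) ->
    forall N, (N0 <= N)%N -> u N \is a fin_num.
  by move=> uN0 N N0N; rewrite ge0_fin_numE // (le_lt_trans (uN0 N N0N)) ?ltry.
apply/fine_cvgP; split.
  by have [N0 uN0] := small 1 ltr01; exists N0 => //; exact: fin uN0.
apply/cvgr0Pnorm_le => eps eps0; have [N0 uN0] := small eps eps0.
exists N0 => // N N0N /=.
by rewrite ger0_norm ?fine_ge0 // -lee_fin fineK ?uN0 // (fin _ _ uN0).
Qed.

Theorem theorem5p3 (R : realType) (d : nat) (M : R -> mindex d -> R) :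
  weight_matrix M ->
  (forall lam : R, 0 < lam ->
     exists kap : R, exists A : R,
       [/\ 0 < kap, kap <= lam, 1 <= A &
         forall (a : mindex d) (j : 'I_d),
           M kap (maddS a j) <= A ^+ (mlen a).+1 * M lam a]) ->
  nuclear_LambdaM M.
Proof.
move=> HM HA n; have [m dom] := pweight_polyweight_le HM HA n.
exists m, (diag_functional M n), (diag_vector M n); split.
- by move=> k x c c' _ _; exact: diag_functional_linear.
- by move=> k c _; exact: (normc_diag_functional_le HM dom).
- exact: (sum_pnorm_diag_vector_lt_oo _ HM).
- move=> c Lc; apply: cvge0_le_eps => [N|eps eps0]; first exact: (pnorm_ge0 HM).
  exact: (pnorm_partial_sum_le HM dom).
Qed.
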